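(* Let $K$ be a real quadratic field, let $n,f,m\in\mathbb{Z}_{\geq 1}$, and let $\mathcal{O}\supseteq\mathcal{O}'$ be the orders of $K$ with $\mathrm{cond}(\mathcal{O})=m$ and $\mathrm{cond}(\mathcal{O}')=nm$. Set $\mathfrak{f}=f\mathcal{O}$ and $\mathfrak{f}'=f\mathcal{O}'$. (i) For every $\mathfrak{a}\in I_{\mathcal{O}}(n\mathfrak{f})$, the lattice $\mathfrak{a}\cap\mathcal{O}'$ is $\mathcal{O}'$-invertible. Moreover the map $\Theta:I_{\mathcal{O}}(n\mathfrak{f})\to I_{\mathcal{O}'}(\mathfrak{f}')$, $\Theta(\mathfrak{a})=\mathfrak{a}\cap\mathcal{O}'$, is multiplicative: $\Theta(\mathfrak{a}\mathfrak{a}')=\Theta(\mathfrak{a})\Theta(\mathfrak{a}')$ for all $\mathfrak{a},\mathfrak{a}'\in I_{\mathcal{O}}(n\mathfrak{f})$. (ii) If $\mathfrak{a},\mathfrak{a}'\in I_{\mathcal{O}}(n\mathfrak{f})$ satisfy $\mathfrak{a}\sim_{nf}\mathfrak{a}'$, then $\Theta(\mathfrak{a})\sim_f\Theta(\mathfrak{a}')$; consequently $\Theta$ induces a well-defined surjective map $\widetilde{\Theta}:C_{\mathcal{O}}(n\mathfrak{f})\to C_{\mathcal{O}'}(\mathfrak{f}')$.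
   Context: For a positive integer $k$, $\mathcal{O}_k=\mathbb{Z}+k\omega\mathbb{Z}$ denotes the unique order of $K$ of conductor $k$, where $\mathcal{O}_K=\mathbb{Z}+\omega\mathbb{Z}$. A lattice is a free $\mathbb{Z}$-submodule of rank 2 of $K$; for a lattice $L$, $\mathrm{End}_K(L)=\{\lambda\in K:\lambda L\subseteq L\}$ and $L^{-1}=\{\lambda\in K:\lambda L\subseteq\mathrm{End}_K(L)\}$. An $\mathcal{O}$-ideal is a lattice stable under $\mathcal{O}$; it is invertible ($\mathcal{O}$-invertible) if its endomorphism ring equals $\mathcal{O}$. For an $\mathcal{O}$-ideal $\mathfrak{g}\subseteq\mathcal{O}$, $I_{\mathcal{O}}(\mathfrak{g})$ is the set of invertible $\mathcal{O}$-ideals $\mathfrak{b}\subseteq\mathcal{O}$ with $\mathfrak{b}+\mathfrak{g}=\mathcal{O}$. For lattices $L_1,L_2$ and a positive integer $g$, $L_1\sim_g L_2$ means there is a totally positive $\lambda\in L_1^{-1}g+1$ with $\lambda L_1=L_2$ (totally positive: $\lambda>0$ and its Galois conjugate $\lambda^\sigma>0$); for $\mathfrak{g}=g\mathcal{O}$ the relation $\sim_{\mathfrak{g}}$ on invertible $\mathcal{O}$-ideals is the same as $\sim_g$. The narrow extended class group is $C_{\mathcal{O}}(\mathfrak{g})=I_{\mathcal{O}}(\mathfrak{g})/\sim_{\mathfrak{g}}$. *)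

(* The real quadratic field K = Q(sqrt d) (d > 1 squarefree)
   is modelled concretely as pairs (a, b) of rationals standing for a + b*sqrt d. *)
From mathcomp Require Import all_boot all_order all_algebra all_field.
Set Implicit Arguments. Unset Strict Implicit. Unset Printing Implicit Defensive.
Import Order.TTheory GRing.Theory Num.Theory.
Local Open Scope ring_scope.

Definition qf := (rat * rat)%type.

Definition kzero : qf := (0, 0).
Definition kone : qf := (1, 0).
Definition kadd (x y : qf) : qf := (x.1 + y.1, x.2 + y.2).
Definition kmul (d : nat) (x y : qf) : qf :=
  (x.1 * y.1 + d%:R * (x.2 * y.2), x.1 * y.2 + x.2 * y.1).
Definition kconj (x : qf) : qf := (x.1, - x.2).
Definition kscale (m : int) (x : qf) : qf := (m%:~R * x.1, m%:~R * x.2).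

Definition kemb (d : nat) (x : qf) : algC := ratr x.1 + ratr x.2 * sqrtC d%:R.
Definition totally_positive (d : nat) (x : qf) : Prop :=
  0 < kemb d x /\ 0 < kemb d (kconj x).

Definition squarefree (d : nat) : Prop := forall p, prime p -> ~~ (p * p %| d)%N.
Definition real_quadratic (d : nat) : Prop := (1 < d)%N /\ squarefree d.

(* O_K = Z + omega Z *)
Definition omega (d : nat) : qf :=
  if (d %% 4 == 1)%N then (1 / 2, 1 / 2) else (0, 1).

Definition lat := qf -> Prop.
Definition lat_eq (L1 L2 : lat) : Prop := forall x, L1 x <-> L2 x.
Definition subl (L1 L2 : lat) : Prop := forall x, L1 x -> L2 x.

Definition span2 (e1 e2 : qf) : lat :=
  fun x => exists m n : int, x = kadd (kscale m e1) (kscale n e2).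

Definition is_lattice (L : lat) : Prop :=
  exists e1 e2 : qf,
    (forall m n : int, kadd (kscale m e1) (kscale n e2) = kzero -> m = 0 /\ n = 0)
    /\ lat_eq L (span2 e1 e2).

(* the order O_k = Z + k omega Z of conductor k *)
Definition order_of (d k : nat) : lat := span2 kone (kscale k%:Z (omega d)).

Definition End_lat (d : nat) (L : lat) : lat :=
  fun l => forall x, L x -> L (kmul d l x).
Definition inv_lat (d : nat) (L : lat) : lat :=
  fun l => forall x, L x -> End_lat d L (kmul d l x).

Definition is_ideal (d : nat) (O L : lat) : Prop :=
  is_lattice L /\ forall a x, O a -> L x -> L (kmul d a x).
(* O-invertible O-ideal: endomorphism ring equal to O *)
Definition invertible (d : nat) (O L : lat) : Prop :=
  is_ideal d O L /\ lat_eq (End_lat d L) O.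

Definition lsum (L1 L2 : lat) : lat :=
  fun x => exists y z, L1 y /\ L2 z /\ x = kadd y z.
Definition lcap (L1 L2 : lat) : lat := fun x => L1 x /\ L2 x.
Definition lmul (d : nat) (L1 L2 : lat) : lat :=
  fun x => exists s : seq (qf * qf),
    (forall p, p \in s -> L1 p.1 /\ L2 p.2) /\
    x = foldr kadd kzero (map (fun p => kmul d p.1 p.2) s).
Definition lscale (d : nat) (c : qf) (L : lat) : lat :=
  fun x => exists y, L y /\ x = kmul d c y.
Definition int_ideal (d g : nat) (O : lat) : lat := lscale d (g%:R, 0) O.

Definition IO (d : nat) (O g : lat) (b : lat) : Prop :=
  invertible d O b /\ subl b O /\ lat_eq (lsum b g) O.

Definition equiv_mod (d g : nat) (L1 L2 : lat) : Prop :=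
  exists l : qf, totally_positive d l /\
    (exists mu, inv_lat d L1 mu /\ l = kadd (kscale g%:Z mu) kone) /\
    lat_eq (lscale d l L1) L2.

(* Theta(a) = a cap O' lies between n a and a, so it is a lattice.  Writing
   1 = al + nf ga with al in a cap O' and ga in O, every x splits as
   x al + nf (x ga); this gives End(Theta(a)) = O', Theta(a) + f O' = O' and,
   applied to the units of a and a', multiplicativity.  An equivalence
   lambda = 1 + nf mu descends to Theta with mu replaced by n mu.
   For surjectivity, an invertible O'-ideal b coprime to f is moved, by a totally
   positive nu = 1 mod f, to an ideal nu b coprime to n, one prime p | n at a time:
   nu = conj(beta) / D for some beta = D - f x in b (D the determinant of b) whose
   normalised norm is prime to p.  Such a beta exists, for otherwise p would divide
   the whole norm form of b and conj(e1) e2 / (p D) would be an endomorphism of b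
   outside O'.  Finally a = (nu b) O satisfies a cap O' = nu b. *)

From mathcomp Require Import all_boot all_order all_algebra all_field.
From mathcomp Require Import ring lra zify.
From Stdlib Require Import Classical Wf_nat.
Set Implicit Arguments. Unset Strict Implicit. Unset Printing Implicit Defensive.
Import Order.TTheory GRing.Theory Num.Theory.
Local Open Scope ring_scope.

Ltac kring := rewrite /kadd /kmul /kscale /kone /kzero /kconj /=;
  apply: injective_projections => /=;
  rewrite ?(PoszM, intrD, intrM, intrN, intrB, mulrz_nat); ring.

Section FieldArithmetic.
Variable d : nat.
Implicit Types x y z : qf.

Lemma kaddA x y z : kadd x (kadd y z) = kadd (kadd x y) z. Proof. kring. Qed.
Lemma kmulC x y : kmul d x y = kmul d y x. Proof. kring. Qed.
Lemma kmulA x y z : kmul d x (kmul d y z) = kmul d (kmul d x y) z. Proof. kring. Qed.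
Lemma kmulDr x y z : kmul d x (kadd y z) = kadd (kmul d x y) (kmul d x z). Proof. kring. Qed.
Lemma kmulDl x y z : kmul d (kadd y z) x = kadd (kmul d y x) (kmul d z x). Proof. kring. Qed.
Lemma kmulZr (k : int) x y : kmul d x (kscale k y) = kscale k (kmul d x y). Proof. kring. Qed.
Lemma kmulZl (k : int) x y : kmul d (kscale k x) y = kscale k (kmul d x y). Proof. kring. Qed.
Lemma kscaleA (a b : int) x : kscale a (kscale b x) = kscale (a * b) x. Proof. kring. Qed.
Lemma kscaleDr (a : int) x y : kscale a (kadd x y) = kadd (kscale a x) (kscale a y).
Proof. kring. Qed.
Lemma kscale1 x : kscale 1 x = x. Proof. by case: x => a b; rewrite /kscale /= !mul1r. Qed.
Lemma kscale0 x : kscale 0 x = kzero. Proof. by rewrite /kscale /= !mul0r. Qed.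
Lemma kscalek0 (a : int) : kscale a kzero = kzero. Proof. by rewrite /kscale /= !mulr0. Qed.
Lemma kmul1 x : kmul d kone x = x. Proof. case: x => a b; kring. Qed.
Lemma kmul1r x : kmul d x kone = x. Proof. case: x => a b; kring. Qed.
Lemma kmul0 x : kmul d kzero x = kzero. Proof. kring. Qed.
Lemma kmul0r x : kmul d x kzero = kzero. Proof. kring. Qed.
Lemma kadd0 x : kadd kzero x = x. Proof. case: x => a b; kring. Qed.
Lemma kadd0r x : kadd x kzero = x. Proof. case: x => a b; kring. Qed.
Lemma kaddN x : kadd x (kscale (-1) x) = kzero. Proof. kring. Qed.
Lemma kconjM x y : kconj (kmul d x y) = kmul d (kconj x) (kconj y). Proof. kring. Qed.
Lemma kmul_natl (g : nat) x : kmul d (g%:R, 0) x = kscale g%:Z x. Proof. kring. Qed.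
Lemma kadd_transl x y z : x = kadd y z -> y = kadd x (kscale (-1) z).
Proof. move=> ->; kring. Qed.

Lemma kmul_unit_split x al ga (g : int) : kone = kadd al (kscale g ga) ->
  x = kadd (kmul d x al) (kscale g (kmul d x ga)).
Proof. by move=> e; rewrite -kmulZr -kmulDr -e kmul1r. Qed.

End FieldArithmetic.

(* [omega_cst] and [omega_trace] are the coefficients of the minimal polynomial
   of [omega]: omega^2 = omega_cst + omega_trace * omega. *)
Definition omega_trace (d : nat) : int := if (d %% 4 == 1)%N then 1 else 0.
Definition omega_cst (d : nat) : int :=
  if (d %% 4 == 1)%N then ((d - 1) %/ 4)%N%:Z else d%:Z.

(* coordinates in the basis (1, omega) of K over Q *)
Definition kcoordw (d : nat) (x : qf) : rat := x.2 / (omega d).2.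
Definition kcoord1 (d : nat) (x : qf) : rat := x.1 - kcoordw d x * (omega d).1.

Section Coordinates.
Variable d : nat.
Implicit Types x y : qf.
Local Notation c1 := (kcoord1 d).
Local Notation cw := (kcoordw d).

Lemma omega2_neq0 : (omega d).2 != 0.
Proof. by rewrite /omega; case: ifP. Qed.

Lemma kcoord_inj x y : cw x = cw y -> c1 x = c1 y -> x = y.
Proof.
rewrite /kcoord1 => hw; rewrite hw => /addIr h1.
apply: injective_projections => //.
by move: hw => /(congr1 ( *%R^~ (omega d).2)); rewrite !divfK ?omega2_neq0.
Qed.

Lemma kcoordwD x y : cw (kadd x y) = cw x + cw y. Proof. by rewrite /kcoordw /= mulrDl. Qed.
Lemma kcoord1D x y : c1 (kadd x y) = c1 x + c1 y. Proof. rewrite /kcoord1 kcoordwD /=; ring. Qed.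
Lemma kcoordwZ (a : int) x : cw (kscale a x) = a%:~R * cw x.
Proof. by rewrite /kcoordw /= mulrA. Qed.
Lemma kcoord1Z (a : int) x : c1 (kscale a x) = a%:~R * c1 x.
Proof. rewrite /kcoord1 kcoordwZ /=; ring. Qed.
Lemma kcoordw_rat (r : rat) : cw (r, 0) = 0. Proof. by rewrite /kcoordw /= mul0r. Qed.
Lemma kcoord1_rat (r : rat) : c1 (r, 0) = r.
Proof. by rewrite /kcoord1 kcoordw_rat mul0r subr0. Qed.
Lemma kcoordw1 : cw kone = 0. Proof. exact: kcoordw_rat. Qed.
Lemma kcoord11 : c1 kone = 1. Proof. exact: kcoord1_rat. Qed.
Lemma kcoordw0 : cw kzero = 0. Proof. exact: kcoordw_rat. Qed.
Lemma kcoord10 : c1 kzero = 0. Proof. exact: kcoord1_rat. Qed.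
Lemma kcoordw_omega : cw (omega d) = 1. Proof. by rewrite /kcoordw divff ?omega2_neq0. Qed.
Lemma kcoord1_omega : c1 (omega d) = 0.
Proof. by rewrite /kcoord1 kcoordw_omega mul1r subrr. Qed.

Lemma kcoordwM x y :
  cw (kmul d x y) = c1 x * cw y + cw x * c1 y + (omega_trace d)%:~R * cw x * cw y.
Proof. rewrite /kcoord1 /kcoordw /omega_trace /omega /kmul /=; case: ifP => _ /=; by field. Qed.

Lemma kcoord1M x y : c1 (kmul d x y) = c1 x * c1 y + (omega_cst d)%:~R * cw x * cw y.
Proof.
rewrite /kcoord1 /kcoordw /omega_cst /omega /kmul /=; case: ifP => /eqP h /=; last first.
  by rewrite pmulrn; field.
have -> : d%:R = 4 * ((d - 1) %/ 4)%N%:R + 1 :> rat.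
  have e := divn_eq d 4; rewrite h in e.
  have -> : ((d - 1) %/ 4 = d %/ 4)%N by rewrite {1}e addnK mulnK.
  by rewrite {1}e natrD natrM mulrC.
by rewrite pmulrn; field.
Qed.

Lemma kcoordw_ratM (r : rat) x : cw (kmul d (r, 0) x) = r * cw x.
Proof. rewrite kcoordwM kcoord1_rat kcoordw_rat; ring. Qed.
Lemma kcoord1_ratM (r : rat) x : c1 (kmul d (r, 0) x) = r * c1 x.
Proof. rewrite kcoord1M kcoord1_rat kcoordw_rat; ring. Qed.

Lemma kcoordwC x : cw (kconj x) = - cw x. Proof. by rewrite /kcoordw /= mulNr. Qed.
Lemma kcoord1C x : c1 (kconj x) = c1 x + (omega_trace d)%:~R * cw x.
Proof. rewrite /kcoord1 /kcoordw /omega_trace /omega /=; case: ifP => _ /=; by field. Qed.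

End Coordinates.

Ltac kcoords := rewrite ?(kcoordwM, kcoord1M, kcoordwC, kcoord1C, kcoordwD, kcoord1D,
  kcoordwZ, kcoord1Z, kcoordw_rat, kcoord1_rat, kcoordw1, kcoord11, kcoordw0, kcoord10,
  kcoordw_omega, kcoord1_omega).

Section Orders.
Variable d : nat.
Implicit Types x y : qf.

Lemma order_ofP k x : order_of d k x <->
  exists i j : int, kcoord1 d x = i%:~R /\ kcoordw d x = k%:R * j%:~R.
Proof.
split=> [[i [j ->]]|[i [j [h1 hw]]]].
  by exists i, j; kcoords; split; rewrite ?pmulrn; ring.
exists i, j; apply: (@kcoord_inj d); kcoords; rewrite ?h1 ?hw ?pmulrn; ring.
Qed.

Lemma order_ofD k x y : order_of d k x -> order_of d k y -> order_of d k (kadd x y).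
Proof.
move=> /order_ofP [i [j [h1 h2]]] /order_ofP [i' [j' [h1' h2']]]; apply/order_ofP.
by exists (i + i'), (j + j'); kcoords; rewrite h1 h2 h1' h2' !intrD; split; ring.
Qed.

Lemma order_ofZ k (a : int) x : order_of d k x -> order_of d k (kscale a x).
Proof.
move=> /order_ofP [i [j [h1 h2]]]; apply/order_ofP.
by exists (a * i), (a * j); kcoords; rewrite h1 h2 !intrM; split; ring.
Qed.

Lemma order_of1 k : order_of d k kone.
Proof. by exists 1, 0; rewrite kscale1 kscale0 kadd0r. Qed.

Lemma order_of0 k : order_of d k kzero.
Proof. by exists 0, 0; rewrite !kscale0 kadd0. Qed.

Lemma order_of_gen k : order_of d k (kscale k%:Z (omega d)).
Proof. by exists 0, 1; rewrite kscale1 kscale0 kadd0. Qed.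

Lemma order_ofM k x y : order_of d k x -> order_of d k y -> order_of d k (kmul d x y).
Proof.
move=> /order_ofP [i [j [h1 h2]]] /order_ofP [i' [j' [h1' h2']]]; apply/order_ofP.
exists (i * i' + omega_cst d * (k%:Z * j) * (k%:Z * j')),
  (i * j' + j * i' + omega_trace d * j * (k%:Z * j')).
kcoords; rewrite h1 h2 h1' h2' ?(intrD, intrM, pmulrn); split; ring.
Qed.

Lemma order_of_sub n k x : order_of d (n * k) x -> order_of d k x.
Proof.
move=> /order_ofP [i [j [h1 h2]]]; apply/order_ofP.
by exists i, (n%:Z * j); rewrite h1 h2 natrM intrM mulrA [k%:R * _]mulrC.
Qed.

Lemma order_of_scale n k x : order_of d k x -> order_of d (n * k) (kscale n%:Z x).
Proof.
move=> /order_ofP [i [j [h1 h2]]]; apply/order_ofP.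
by exists (n%:Z * i), j; kcoords; rewrite h1 h2 natrM !intrM; split; ring.
Qed.

Lemma order_of_split n k x : order_of d k x -> exists y (j : int),
  order_of d (n * k) y /\ x = kadd y (kscale j (kscale k%:Z (omega d))).
Proof. by case=> i [j ->]; exists (kscale i kone), j; split=> //; apply/order_ofZ/order_of1. Qed.

End Orders.

Definition knorm (d : nat) (x : qf) : rat := x.1 ^+ 2 - d%:R * x.2 ^+ 2.
Definition kinv (d : nat) (x : qf) : qf := (x.1 / knorm d x, - x.2 / knorm d x).

Section Inverse.
Variable d : nat.

Lemma kmulV x : knorm d x != 0 -> kmul d x (kinv d x) = kone.
Proof.
move=> h; rewrite /kmul /kinv /kone; apply: injective_projections => /=;
  by move: h; rewrite /knorm => h; field.
Qed.

Lemma kmulI nu x y : knorm d nu != 0 -> kmul d nu x = kmul d nu y -> x = y.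
Proof.
move=> h /(congr1 (kmul d (kinv d nu))).
by rewrite !kmulA [kmul d (kinv d nu) nu]kmulC kmulV // !kmul1.
Qed.

End Inverse.

Definition lincomb (e1 e2 : qf) (i j : int) : qf := kadd (kscale i e1) (kscale j e2).
Definition indep (e1 e2 : qf) : Prop :=
  forall i j : int, lincomb e1 e2 i j = kzero -> i = 0 /\ j = 0.
Definition add_subgroup (L : lat) : Prop :=
  [/\ L kzero, forall x y, L x -> L y -> L (kadd x y)
    & forall (a : int) x, L x -> L (kscale a x)].

Lemma lincomb_addZ e1 e2 i j i' j' (k : int) :
  kadd (lincomb e1 e2 i j) (kscale k (lincomb e1 e2 i' j')) =
  lincomb e1 e2 (i + k * i') (j + k * j').
Proof. rewrite /lincomb; kring. Qed.

Lemma lattice_add_subgroup L : is_lattice L -> add_subgroup L.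
Proof.
case=> e1 [e2 [_ hL]]; split.
- by apply/hL; exists 0, 0; rewrite !kscale0 kadd0.
- move=> x y /hL [i [j ->]] /hL [i' [j' ->]]; apply/hL; exists (i + i'), (j + j'); kring.
- move=> a x /hL [i [j ->]]; apply/hL; exists (a * i), (a * j); kring.
Qed.

Lemma order_of_add_subgroup d k : add_subgroup (order_of d k).
Proof. split; [exact: order_of0 | exact: order_ofD | exact: order_ofZ]. Qed.

Lemma lscale_lattice d L nu : is_lattice L -> knorm d nu != 0 -> is_lattice (lscale d nu L).
Proof.
case=> e1 [e2 [hi hL]] hnu; exists (kmul d nu e1), (kmul d nu e2); split.
  move=> i j; rewrite -!kmulZr -kmulDr -(kmul0r d nu) => /(kmulI hnu); exact: hi.
move=> x; split.
  by case=> y [/hL [i [j ->]] ->]; exists i, j; rewrite kmulDr !kmulZr.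
case=> i [j ->]; exists (kadd (kscale i e1) (kscale j e2)); split.
  by apply/hL; exists i, j.
by rewrite kmulDr !kmulZr.
Qed.

Lemma ex_least_nat (P : nat -> Prop) : (exists n, P n) ->
  exists n, P n /\ forall k, P k -> (n <= k)%N.
Proof.
move=> /(@dec_inh_nat_subset_has_unique_least_element P (fun n => classic (P n))).
by case=> n [[Pn nmin] _]; exists n; split=> // k /nmin /ssrnat.leP.
Qed.

Lemma modz_minimal (P : int -> Prop) (a : nat) (x : int) : (0 < a)%N ->
  (forall r : nat, (0 < r)%N -> P r%:Z -> (a <= r)%N) -> P (x %% a)%Z -> (x %% a)%Z = 0.
Proof.
move=> a0 amin Pr; have r0 : 0 <= (x %% a)%Z by apply: modz_ge0; lia.
have ra : (x %% a)%Z < a%:Z by apply: ltz_pmod; lia.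
case: (boolP ((x %% a)%Z == 0)) => [/eqP //|rn0].
have : (a <= `|(x %% a)%Z|)%N by apply: amin; [rewrite absz_gt0 | rewrite gez0_abs].
lia.
Qed.

Section SubLattice.
Variables (e1 e2 : qf) (M : lat).
Hypotheses (he : indep e1 e2) (hM : add_subgroup M) (hML : subl M (span2 e1 e2)).
Local Notation lc := (lincomb e1 e2).

Lemma lincomb_triangular_indep (a c : nat) (b : int) : (0 < a)%N -> (0 < c)%N ->
  indep (lc a%:Z b) (lc 0 c%:Z).
Proof.
move=> a0 c0 p q; rewrite [lincomb _ _ _ _]/lincomb.
have -> : kadd (kscale p (lc a b)) (kscale q (lc 0 c)) = lc (p * a) (p * b + q * c).
  by rewrite /lincomb; kring.
move=> /he [/eqP h1 /eqP h2].
have p0 : p = 0 by move: h1; rewrite mulf_eq0 => /orP [/eqP //|]; lia.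
split=> //; move: h2; rewrite p0 mul0r add0r mulf_eq0 => /orP [/eqP -> //|]; lia.
Qed.

Lemma triangular_basis (a c : nat) (b : int) : (0 < a)%N -> (0 < c)%N ->
  M (lc a%:Z b) -> M (lc 0 c%:Z) ->
  (forall (a' : nat) j, (0 < a')%N -> M (lc a'%:Z j) -> (a <= a')%N) ->
  (forall c' : nat, (0 < c')%N -> M (lc 0 c'%:Z) -> (c <= c')%N) ->
  lat_eq M (span2 (lc a b) (lc 0 c)).
Proof.
move=> a0 c0 Mab Mc amin cmin x; case: hM => _ MD MZ; split; last first.
  by case=> p [q ->]; apply: MD; apply: MZ.
move=> Mx; have [i [j ex]] := hML Mx; rewrite -/(lc i j) in ex.
set q := (i %/ a%:Z)%Z; set r := (i %% a%:Z)%Z.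
have Mr : M (lc r (j - q * b)).
  have := MD _ _ Mx (MZ (- q) _ Mab); rewrite ex lincomb_addZ.
  by congr (M (lc _ _)); [rewrite /r /q {1}(divz_eq i a%:Z) | ]; ring.
have r0 : r = 0.
  by apply: (@modz_minimal (fun r => exists j, M (lc r j))) => // [r' r'0 [j']|]; eauto.
set q' := ((j - q * b) %/ c%:Z)%Z; set r' := ((j - q * b) %% c%:Z)%Z.
have Mr' : M (lc 0 r').
  have := MD _ _ Mr (MZ (- q') _ Mc); rewrite lincomb_addZ r0.
  by congr (M (lc _ _)); [ | rewrite /r' /q' {1}(divz_eq (j - q * b) c%:Z)]; ring.
have r'0 : r' = 0 by apply: (@modz_minimal (fun r => M (lc 0 r))).
exists q, q'; rewrite ex.
have ei : i = q * a%:Z by rewrite /q {1}(divz_eq i a%:Z) -/r r0 addr0.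
have ej : j = q * b + q' * c%:Z.
  by rewrite -[j](subrK (q * b)) {1}(divz_eq (j - q * b) c%:Z) -/r' r'0 addr0 addrC.
rewrite ei ej /lincomb; kring.
Qed.

End SubLattice.

(* Hermite normal form: M has a basis (a e1 + b e2, c e2) with a, c > 0 minimal. *)
Lemma sublattice L M (N : nat) : (0 < N)%N -> is_lattice L -> add_subgroup M ->
  subl M L -> (forall x, L x -> M (kscale N%:Z x)) -> is_lattice M.
Proof.
move=> N0 [e1 [e2 [he hL]]] hM hML hNM.
have ML : subl M (span2 e1 e2) by move=> x /hML /hL.
have Le (i j : int) : L (lincomb e1 e2 i j) by apply/hL; exists i, j.
have MN1 : M (lincomb e1 e2 N%:Z 0).
  by have := hNM _ (Le 1 0); rewrite /lincomb kscaleDr !kscaleA mulr1 mulr0.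
have MN2 : M (lincomb e1 e2 0 N%:Z).
  by have := hNM _ (Le 0 1); rewrite /lincomb kscaleDr !kscaleA mulr1 mulr0.
have [a [[a0 [b Mab]] amin]] := @ex_least_nat
  (fun a => (0 < a)%N /\ exists j, M (lincomb e1 e2 a%:Z j))
  (ex_intro _ N (conj N0 (ex_intro _ 0 MN1))).
have [c [[c0 Mc] cmin]] := @ex_least_nat
  (fun c => (0 < c)%N /\ M (lincomb e1 e2 0 c%:Z)) (ex_intro _ N (conj N0 MN2)).
exists (lincomb e1 e2 a%:Z b), (lincomb e1 e2 0 c%:Z); split.
  exact: lincomb_triangular_indep.
apply: triangular_basis => // [a' j a'0 Ma'|c' c'0 Mc'].
  by apply: amin; split=> //; exists j.
by apply: cmin.
Qed.

Section IdealArithmetic.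
Variable d : nat.

Lemma int_idealP g (O : lat) z : int_ideal d g O z <-> exists y, O y /\ z = kscale g%:Z y.
Proof. by split; case=> y [hy ->]; exists y; rewrite kmul_natl. Qed.

Lemma IO_unit_split (O a : lat) g : O kone -> IO d O (int_ideal d g O) a ->
  exists al ga, a al /\ O ga /\ kone = kadd al (kscale g%:Z ga).
Proof.
move=> O1 [_ [_ /(_ kone) [_ /(_ O1)]]].
by case=> al [z [hal [/int_idealP [ga [hga ->]] e]]]; exists al, ga.
Qed.

Lemma lmul_ind (L1 L2 P : lat) : P kzero -> (forall x y, P x -> P y -> P (kadd x y)) ->
  (forall y z, L1 y -> L2 z -> P (kmul d y z)) -> subl (lmul d L1 L2) P.
Proof.
move=> P0 PD Pyz x [s [hs ->]]; elim: s hs => [|p s IH] hs //=.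
apply: PD; first by case: (hs p (mem_head _ _)) => h1 h2; exact: Pyz.
by apply: IH => q hq; apply: hs; rewrite in_cons hq orbT.
Qed.

Lemma lmul0 L1 L2 : lmul d L1 L2 kzero.
Proof. by exists [::]. Qed.

Lemma lmulD L1 L2 x y : lmul d L1 L2 x -> lmul d L1 L2 y -> lmul d L1 L2 (kadd x y).
Proof.
case=> [s [hs ->]] [t [ht ->]]; exists (s ++ t); split.
  by move=> p; rewrite mem_cat => /orP [/hs|/ht].
rewrite map_cat foldr_cat; elim: s {hs} => [|p s IH] /=; first by rewrite kadd0.
by rewrite -IH kaddA.
Qed.

Lemma lmul_mul (L1 L2 : lat) y z : L1 y -> L2 z -> lmul d L1 L2 (kmul d y z).
Proof.
move=> h1 h2; exists [:: (y, z)]; split; last by rewrite /= kadd0r.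
by move=> p; rewrite inE => /eqP ->.
Qed.

Lemma lmul_lcap_sub (L1 L2 R : lat) : add_subgroup R ->
  (forall x y, R x -> R y -> R (kmul d x y)) ->
  subl (lmul d (lcap L1 R) (lcap L2 R)) (lcap (lmul d L1 L2) R).
Proof.
case=> R0 RD _ RM; apply: lmul_ind.
- by split; [exact: lmul0 | exact: R0].
- by move=> y z [h1 h2] [h3 h4]; split; [apply: lmulD | apply: RD].
- by move=> y z [h1 h2] [h3 h4]; split; [apply: lmul_mul | apply: RM].
Qed.

End IdealArithmetic.

Definition iideal (d K : nat) (c : lat) : Prop :=
  invertible d (order_of d K) c /\ subl c (order_of d K).
(* c + q O_K = O_K *)
Definition int_coprime (d K : nat) (c : lat) (q : nat) : Prop :=
  exists al ga, c al /\ order_of d K ga /\ kone = kadd al (kscale q%:Z ga).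
(* nu = 1 mod g on c, i.e. (1 - nu) c is contained in g O_K *)
Definition congr_one (d K : nat) (nu : qf) (c : lat) (g : nat) : Prop :=
  forall x, c x -> exists2 z, order_of d K z & kadd x (kscale (-1) (kmul d nu x)) = kscale g%:Z z.

Section IntegralIdeals.
Variables (d K : nat).
Local Notation O := (order_of d K).
Implicit Types (c : lat) (nu : qf).

Lemma iideal_lattice c : iideal d K c -> is_lattice c. Proof. by case=> [[[]]]. Qed.
Lemma iideal_stable c : iideal d K c -> forall al x, O al -> c x -> c (kmul d al x).
Proof. by case=> [[[]]]. Qed.
Lemma iideal_End c : iideal d K c -> lat_eq (End_lat d c) O. Proof. by case=> [[]]. Qed.
Lemma iideal_sub c : iideal d K c -> subl c O. Proof. by case. Qed.

Lemma iideal_add_subgroup c : iideal d K c -> add_subgroup c.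
Proof. by move/iideal_lattice/lattice_add_subgroup. Qed.

Lemma IO_iidealP c g : IO d O (int_ideal d g O) c <-> iideal d K c /\ int_coprime d K c g.
Proof.
split=> [Hc|[[hinv hsub] [al [ga [hal [hga e]]]]]].
  by split; [case: Hc => ? [] | exact: IO_unit_split (order_of1 d K) Hc].
split=> //; split=> // x; split.
  case=> y [z [hy [/int_idealP [w [hw ->]] ->]]].
  by apply: order_ofD; [exact: hsub | exact: order_ofZ].
move=> hx; rewrite (kmul_unit_split d x e).
exists (kmul d x al), (kscale g%:Z (kmul d x ga)); split.
  by case: hinv => [[_ hs] _]; apply: hs.
by split=> //; apply/int_idealP; exists (kmul d x ga); split=> //; apply: order_ofM.
Qed.

Lemma lscaleM nu1 nu2 c :
  lat_eq (lscale d (kmul d nu2 nu1) c) (lscale d nu2 (lscale d nu1 c)).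
Proof.
move=> x; split.
  by case=> y [hy ->]; exists (kmul d nu1 y); split; [exists y | rewrite kmulA].
by case=> y [[z [hz ->]] ->]; exists z; split=> //; rewrite kmulA.
Qed.

Lemma iideal_lscale c nu : iideal d K c -> knorm d nu != 0 ->
  (forall x, c x -> O (kmul d nu x)) -> iideal d K (lscale d nu c).
Proof.
move=> hc hnu hO.
have st al x : O al -> lscale d nu c x -> lscale d nu c (kmul d al x).
  move=> hal [y [hy ->]]; exists (kmul d al y); split; first exact: (iideal_stable hc hal hy).
  by rewrite !kmulA [kmul d al nu]kmulC.
split; last by move=> x [y [hy ->]]; apply: hO.
split; first by split; [exact: lscale_lattice (iideal_lattice hc) hnu | exact: st].
move=> l; split=> [hl|hl x hx]; last exact: st.
apply/(iideal_End hc) => y hy.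
have [y' [hy' e]] := hl (kmul d nu y) (ex_intro _ y (conj hy erefl)).
suff -> : kmul d l y = y' by [].
by apply: (kmulI hnu); rewrite -e !kmulA [kmul d l nu]kmulC.
Qed.

Lemma congr_one_sub c nu g : iideal d K c -> congr_one d K nu c g ->
  forall x, c x -> O (kmul d nu x).
Proof.
move=> hc hcg x hx; have [z hz ez] := hcg _ hx.
have -> : kmul d nu x = kadd x (kscale (-1) (kscale g%:Z z)) by rewrite -ez; kring.
by apply: order_ofD; [exact: iideal_sub hc _ hx | apply/order_ofZ/order_ofZ].
Qed.

Lemma int_coprime_eq L L' q : lat_eq L L' -> int_coprime d K L q -> int_coprime d K L' q.
Proof. by move=> e [al [ga [h1 h2]]]; exists al, ga; split=> //; exact/e. Qed.

Lemma int_coprimeM c a b : iideal d K c -> int_coprime d K c a -> int_coprime d K c b ->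
  int_coprime d K c (a * b).
Proof.
move=> hc [al [ga [h1 [h2 e1]]]] [bl [gb [h3 [h4 e2]]]].
have [_ cD cZ] := iideal_add_subgroup hc.
exists (kadd al (kscale a%:Z (kmul d ga bl))), (kmul d ga gb); split.
  by apply: cD => //; apply/cZ/(iideal_stable hc).
split; first exact: order_ofM.
rewrite {1}e1 -{1}(kmul1r d ga) e2; kring.
Qed.

Lemma int_coprime_lscale c nu q g : int_coprime d K c q -> congr_one d K nu c g ->
  (q %| g)%N -> int_coprime d K (lscale d nu c) q.
Proof.
move=> [al [ga [h1 [h2 e1]]]] hcg /dvdnP [r eg]; have [z hz ez] := hcg _ h1.
exists (kmul d nu al), (kadd ga (kscale r%:Z z)); split; first by exists al.
split; first exact/order_ofD/order_ofZ.
rewrite e1 {1}(kadd_transl (esym ez)) eg; kring.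
Qed.

End IntegralIdeals.

Section ThetaMap.
Variables (d n f m : nat).
Hypothesis n_gt0 : (0 < n)%N.
Local Notation O := (order_of d m).
Local Notation O' := (order_of d (n * m)).
Local Notation IOnf := (IO d O (int_ideal d (n * f) O)).

Lemma order_of_scale_nf x : O x -> O' (kscale (n * f)%N%:Z x).
Proof. by move=> h; rewrite [(n * f)%N]mulnC PoszM -kscaleA; apply/order_ofZ/order_of_scale. Qed.

Section OneIdeal.
Variable a : lat.
Hypothesis Ha : IOnf a.

Let ha : iideal d m a. Proof. by case/IO_iidealP: Ha. Qed.
Let a_stable := iideal_stable ha.
Let a_sub := iideal_sub ha.

Lemma theta_scale x : a x -> lcap a O' (kscale n%:Z x).
Proof.
move=> h; split; last by apply: order_of_scale; apply: a_sub.
by case: (iideal_add_subgroup ha) => _ _; apply.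
Qed.

Lemma theta_lattice : is_lattice (lcap a O').
Proof.
apply: (sublattice n_gt0 (iideal_lattice ha)) => [|x []//|]; last exact: theta_scale.
case: (iideal_add_subgroup ha) (order_of_add_subgroup d (n * m)) => a0 aD aZ [o0 oD oZ].
split=> [//|x y [? ?] [? ?]|k x [? ?]]; split; auto.
Qed.

Lemma theta_stable al x : O' al -> lcap a O' x -> lcap a O' (kmul d al x).
Proof.
by move=> h [h1 h2]; split; [apply: a_stable => //; apply: order_of_sub h | apply: order_ofM].
Qed.

Lemma theta_unit_split :
  exists al ga, lcap a O' al /\ O ga /\ kone = kadd al (kscale (n * f)%N%:Z ga).
Proof.
have [al [ga [h1 [h2 h3]]]] := IO_unit_split (order_of1 d m) Ha.
exists al, ga; do !split=> //.
rewrite (kadd_transl h3); apply: order_ofD; first exact: order_of1.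
by apply/order_ofZ/order_of_scale_nf.
Qed.

(* Writing 1 = al + nf ga, any l in End(a cap O') lies in O because
   l x = (l al) x + f (l (n ga x)) with both terms in a, and then
   l = l al + nf (l ga) lies in O'. *)
Lemma theta_End : lat_eq (End_lat d (lcap a O')) O'.
Proof.
have [al [ga [[hal hal'] [hga e]]]] := theta_unit_split.
have [_ aD aZ] := iideal_add_subgroup ha.
move=> l; split=> [hl|hl x hx]; last exact: theta_stable.
have [lal_a lal_O'] := hl al (conj hal hal').
have hlO : O l.
  apply/(iideal_End ha) => x hx; rewrite (kmul_unit_split d x e) kmulDr.
  apply: aD.
    have -> : kmul d l (kmul d x al) = kmul d x (kmul d l al) by kring.
    by apply: a_stable => //; apply: a_sub.
  have [h _] := hl _ (theta_scale (aZ f%:Z _ (a_stable hga hx))).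
  suff -> : kmul d l (kscale (n * f)%N%:Z (kmul d x ga)) =
    kmul d l (kscale n%:Z (kscale f%:Z (kmul d ga x))) by [].
  kring.
rewrite (kmul_unit_split d l e); apply: order_ofD => //.
by apply: order_of_scale_nf; apply: order_ofM.
Qed.

Lemma theta_IO : IO d O' (int_ideal d f O') (lcap a O').
Proof.
have [al [ga [hal [hga e]]]] := theta_unit_split.
split; first by split; [split; [exact: theta_lattice | exact: theta_stable] | exact: theta_End].
split=> [x []//|x]; split.
  case=> y [z [[_ hy] [/int_idealP [w [hw ->]] ->]]]; exact/order_ofD/order_ofZ.
move=> hx; rewrite (kmul_unit_split d x e).
exists (kmul d x al), (kscale (n * f)%N%:Z (kmul d x ga)).
split; first exact: theta_stable.
split=> //.
apply/int_idealP; exists (kscale n%:Z (kmul d x ga)); split; last first.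
  by rewrite kscaleA -PoszM mulnC.
by apply/order_of_scale/order_ofM => //; apply: order_of_sub hx.
Qed.

End OneIdeal.

(* With 1 - al bl = n de (al, bl the "units" of a, a'), any x in a a' cap O' splits as
   x = (x al bl (2 - al bl)) + x (1 - al bl)^2, and the second term is a sum of
   products (n y) (n de^2 z) with y in a, z in a'. *)
Lemma theta_mul a a' : IOnf a -> IOnf a' ->
  lat_eq (lcap (lmul d a a') O') (lmul d (lcap a O') (lcap a' O')).
Proof.
move=> Ha Ha' x; split; last first.
  by apply: lmul_lcap_sub; [exact: order_of_add_subgroup | exact: order_ofM].
case=> hx hxO.
have [al [ga [[hal hal'] [hga e]]]] := theta_unit_split Ha.
have [bl [gb [[hbl hbl'] [hgb e']]]] := theta_unit_split Ha'.
set el := kmul d al bl; set u := kadd kone (kscale (-1) el).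
have [de hde eu] : exists2 de, O de & u = kscale n%:Z de.
  exists (kadd (kscale f%:Z ga) (kadd (kscale f%:Z gb)
    (kscale (- (n * f * f)%N%:Z) (kmul d ga gb)))).
    by apply/order_ofD/order_ofD; apply/order_ofZ => //; exact: order_ofM.
  by rewrite /u /el (kadd_transl e) (kadd_transl e'); kring.
have -> : x = kadd (kmul d (kmul d (kmul d (kadd (kscale 2 kone) (kscale (-1) el)) x) al) bl)
    (kmul d x (kmul d u u)) by rewrite /u /el; kring.
apply: lmulD.
  apply: lmul_mul; last by split.
  apply: (theta_stable Ha); last by split.
  by apply/order_ofM/hxO/order_ofD/order_ofZ/order_ofM => //; apply/order_ofZ/order_of1.
move: x hx {hxO}; apply: lmul_ind => [|y z hy hz|y z hy hz]; first by rewrite kmul0; exact: lmul0.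
  by rewrite kmulDl; apply: lmulD.
have -> : kmul d (kmul d y z) (kmul d u u) =
  kmul d (kscale n%:Z y) (kscale n%:Z (kmul d (kmul d de de) z)) by rewrite eu; kring.
apply: lmul_mul; first exact: theta_scale.
apply: (theta_scale Ha'); apply: (iideal_stable _ (order_ofM hde hde) hz).
by case/IO_iidealP: Ha'.
Qed.

Lemma theta_equiv a a' : IOnf a -> IOnf a' ->
  equiv_mod d (n * f) a a' -> equiv_mod d f (lcap a O') (lcap a' O').
Proof.
move=> Ha Ha' [l [tp [[mu [hmu hl]] hsc]]].
have muO y : a y -> O (kmul d mu y).
  by move=> hy; case/IO_iidealP: Ha => ha _; apply/(iideal_End ha); exact: hmu.
have ly y : kmul d l y = kadd (kscale (n * f)%N%:Z (kmul d mu y)) y by rewrite hl; kring.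
exists l; split=> //; split.
  exists (kscale n%:Z mu); split; last by rewrite hl kscaleA -PoszM mulnC.
  move=> x [xa _]; apply/(theta_End Ha); rewrite kmulZl; exact/order_of_scale/muO.
move=> x; split.
  case=> y [[ya yO] ->]; split; first by apply/hsc; exists y.
  by rewrite ly; apply: order_ofD => //; apply/order_of_scale_nf/muO.
case=> xa xO; have [y [ya ex]] := proj2 (hsc x) xa; rewrite ex in xO *.
exists y; do !split=> //.
have -> : y = kadd (kmul d l y) (kscale (-1) (kscale (n * f)%N%:Z (kmul d mu y))).
  by rewrite ly; kring.
by apply/order_ofD/order_ofZ/order_of_scale_nf/muO.
Qed.

End ThetaMap.

Section TotalPositivity.
Variable d : nat.
Implicit Types x y : qf.

Lemma kembM x y : kemb d (kmul d x y) = kemb d x * kemb d y.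
Proof.
rewrite /kemb /kmul /= !rmorphD !rmorphM /= ratr_nat.
have hs := sqrtCK (d%:R : algC); set s := sqrtC _ in hs *.
by rewrite -hs; ring.
Qed.

Lemma kemb1 : kemb d kone = 1.
Proof. by rewrite /kemb /kone /= rmorph1 rmorph0 mul0r addr0. Qed.

Lemma kemb_norm x : kemb d x * kemb d (kconj x) = ratr (knorm d x).
Proof.
rewrite -kembM /kemb /knorm /kmul /kconj /=.
have -> : x.1 * - x.2 + x.2 * x.1 = 0 by ring.
by rewrite rmorph0 mul0r addr0; congr ratr; ring.
Qed.

Lemma tpos_knorm_neq0 x : totally_positive d x -> knorm d x != 0.
Proof. by case=> h1 h2; have := mulr_gt0 h1 h2; rewrite kemb_norm ltr0q => /gt_eqF ->. Qed.

Lemma tpos1 : totally_positive d kone.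
Proof. by split; rewrite ?kemb1 // /kconj /kone /= oppr0 kemb1. Qed.

Lemma tposM x y : totally_positive d x -> totally_positive d y ->
  totally_positive d (kmul d x y).
Proof. by case=> h1 h2 [h3 h4]; split; rewrite ?kconjM kembM mulr_gt0. Qed.

Lemma tpos_inv x : totally_positive d x -> totally_positive d (kinv d x).
Proof.
move=> tx; have hn := tpos_knorm_neq0 tx; case: tx => h1 h2.
have inv_pos (u v : algC) : 0 < v -> u * v = 1 -> 0 < u.
  by move=> v0 e; rewrite -[u]mulr1 -(mulfV (lt0r_neq0 v0)) mulrA e mul1r invr_gt0.
split; first by apply: (inv_pos _ _ h1); rewrite -kembM kmulC kmulV // kemb1.
apply: (inv_pos _ _ h2); rewrite -kembM -kconjM kmulC kmulV //.
by rewrite /kconj /kone /= oppr0 kemb1.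
Qed.

Lemma sqrtC_le_succ : sqrtC (d%:R : algC) <= d.+1%:R.
Proof.
rewrite -[X in _ <= X](@sqrCK _ d.+1%:R) ?ler0n // ler_sqrtC ?qualifE /= ?ler0n //.
  by rewrite -natrX ler_nat; nia.
by rewrite exprn_ge0 ?ler0n.
Qed.

Lemma emb_pos (a b : rat) (s : algC) : 0 <= s -> s <= d.+1%:R ->
  `|b| * d.+1%:R < a -> 0 < ratr a + ratr b * s.
Proof.
move=> s0 s1 hab.
have -> : ratr a + ratr b * s = (ratr (a - `|b| * d.+1%:R) : algC) +
   (ratr `|b| * (d.+1%:R - s) + ratr (b + `|b|) * s).
  by rewrite rmorphB rmorphD /= rmorphM /= ratr_nat; ring.
apply: ltr_pwDl; first by rewrite ltr0q subr_gt0.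
apply: addr_ge0; apply: mulr_ge0; rewrite ?ler0q ?subr_ge0 //.
have : - b <= `|b| by rewrite ler_normr lexx orbT.
lra.
Qed.

(* Both embeddings of nu + M k are positive once M k exceeds |nu.1| + |nu.2| (d + 1). *)
Lemma tpos_shift nu (M : nat) : (0 < M)%N -> exists k : nat,
  totally_positive d (kadd nu (kscale (M * k)%N%:Z kone)).
Proof.
move=> M0.
pose B := Num.bound (`|nu.1| + `|nu.2| * d.+1%:R).
have hB : `|nu.1| + `|nu.2| * d.+1%:R < B%:R.
  by apply: archi_boundP; apply: addr_ge0; rewrite ?mulr_ge0 ?ler0n.
have hMB : (B%:R : rat) <= (M * B)%N%:R by rewrite ler_nat leq_pmull.
have h1 : - nu.1 <= `|nu.1| by rewrite ler_normr lexx orbT.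
have h2 : nu.1 <= `|nu.1| by rewrite ler_normr lexx.
have s0 : 0 <= sqrtC (d%:R : algC) by rewrite sqrtC_ge0 ler0n.
exists B; rewrite /totally_positive /kemb /kadd /kscale /kone /kconj /=.
rewrite pmulrn mulr1 mulr0 addr0.
split; apply: emb_pos => //; try exact: sqrtC_le_succ; rewrite ?normrN; lra.
Qed.

End TotalPositivity.

Definition kdet (d K : nat) (x y : qf) : rat :=
  (kcoord1 d x * kcoordw d y - kcoordw d x * kcoord1 d y) / K%:R.
Definition ktrace (d : nat) (x : qf) : rat := kcoord1 d (kadd x (kconj x)).

Section Determinant.
Variables (d K : nat).
Hypothesis K_gt0 : (0 < K)%N.
Local Notation O := (order_of d K).
Local Notation c1 := (kcoord1 d).
Local Notation cw := (kcoordw d).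
Local Notation det := (kdet d K).

Lemma K_neq0 : (K%:R : rat) != 0. Proof. by rewrite pnatr_eq0 -lt0n. Qed.

Lemma kdet_lincomb e1 e2 i j i' j' :
  det (lincomb e1 e2 i j) (lincomb e1 e2 i' j') = (i * j' - j * i')%:~R * det e1 e2.
Proof. rewrite /kdet /lincomb; kcoords; rewrite !(intrD, intrM, intrB); field; exact: K_neq0. Qed.

Lemma kcoordw_conjM x y : cw (kmul d (kconj x) y) = K%:R * det x y.
Proof. rewrite /kdet; kcoords; field; exact: K_neq0. Qed.

Lemma kcoord1_conjM x y : c1 (kmul d (kconj x) y) =
  det x (kmul d (kscale K%:Z (omega d)) y) - (omega_trace d)%:~R * K%:R * det x y.
Proof. rewrite /kdet; kcoords; rewrite ?pmulrn; field; exact: K_neq0. Qed.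

Lemma kdet_coord x y (a1 b1 a2 b2 : int) :
  c1 x = a1%:~R -> cw x = K%:R * b1%:~R -> c1 y = a2%:~R -> cw y = K%:R * b2%:~R ->
  det x y = (a1 * b2 - b1 * a2)%:~R.
Proof.
move=> ha1 hb1 ha2 hb2; rewrite /kdet ha1 hb1 ha2 hb2 intrB !intrM; field; exact: K_neq0.
Qed.

(* For x = a1 + K b1 w and y = a2 + K b2 w in O: b2 x - b1 y = det x y. *)
Lemma kdet_order x y : O x -> O y ->
  exists k : int, det x y = k%:~R /\ exists i j : int, lincomb x y i j = (det x y, 0).
Proof.
move=> /order_ofP [a1 [b1 [ha1 hb1]]] /order_ofP [a2 [b2 [ha2 hb2]]].
have eD := kdet_coord ha1 hb1 ha2 hb2.
exists (a1 * b2 - b1 * a2); split=> //; exists b2, (- b1).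
apply: (@kcoord_inj d); rewrite /lincomb; kcoords; rewrite ?ha1 ?hb1 ?ha2 ?hb2 ?eD ?intrN.
  ring.
by rewrite intrB !intrM; ring.
Qed.

Lemma kdet_neq0 e1 e2 : indep e1 e2 -> O e1 -> O e2 -> det e1 e2 != 0.
Proof.
move=> he /order_ofP [a1 [b1 [ha1 hb1]]] /order_ofP [a2 [b2 [ha2 hb2]]].
rewrite (kdet_coord ha1 hb1 ha2 hb2) intr_eq0 subr_eq0; apply/negP => /eqP ab.
have [b20 /eqP] : b2 = 0 /\ - b1 = 0.
  apply: he; apply: (@kcoord_inj d); rewrite /lincomb; kcoords;
    rewrite ?ha1 ?hb1 ?ha2 ?hb2 ?intrN; first ring.
  by rewrite mulNr -!intrM -intrB [b2 * a1]mulrC ab subrr.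
rewrite oppr_eq0 => /eqP b10.
have [a20 /eqP] : a2 = 0 /\ - a1 = 0.
  apply: he; apply: (@kcoord_inj d); rewrite /lincomb; kcoords;
    rewrite ?ha1 ?hb1 ?ha2 ?hb2 ?b10 ?b20 ?intrN; ring.
rewrite oppr_eq0 => /eqP a10.
have e10 : e1 = kzero by apply: (@kcoord_inj d); kcoords; rewrite ?ha1 ?hb1 ?a10 ?b10 ?mulr0.
have e0 : lincomb e1 e2 1 0 = kzero by rewrite /lincomb e10 kscalek0 kscale0 kadd0.
by have [] := he _ _ e0.
Qed.

End Determinant.

Section NormForm.
Variables (d K : nat) (c : lat) (e1 e2 : qf).
Hypotheses (K_gt0 : (0 < K)%N) (hc : iideal d K c).
Hypotheses (he : indep e1 e2) (hL : lat_eq c (span2 e1 e2)).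
Local Notation O := (order_of d K).
Local Notation c1 := (kcoord1 d).
Local Notation cw := (kcoordw d).
Local Notation lc := (lincomb e1 e2).
Let D := kdet d K e1 e2.

(* N(x) / D: the norm form of the lattice c *)
Definition nnorm x := c1 (kmul d (kconj x) x) / D.

Lemma lincomb_in i j : c (lc i j). Proof. by apply/hL; exists i, j. Qed.

Lemma basis_in : c e1 /\ c e2.
Proof. by split; apply/hL; [exists 1, 0 | exists 0, 1]; rewrite kscale1 kscale0 ?kadd0 ?kadd0r. Qed.

Lemma basis_in_order : O e1 /\ O e2.
Proof. by case: basis_in => h1 h2; split; apply: (iideal_sub hc). Qed.

Lemma D_neq0 : D != 0.
Proof. by case: basis_in_order => h1 h2; exact: kdet_neq0. Qed.

Lemma D_int : exists Dz : int, D = Dz%:~R /\ c (D, 0).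
Proof.
case: basis_in_order => h1 h2; have [k [ek [i [j eij]]]] := kdet_order K_gt0 h1 h2.
by exists k; split=> //; rewrite /D -eij; exact: lincomb_in.
Qed.

Lemma kdet_in x y : c x -> c y -> exists k : int, kdet d K x y = k%:~R * D.
Proof.
by move=> /hL [i [j ->]] /hL [i' [j' ->]]; exists (i * j' - j * i'); exact: kdet_lincomb.
Qed.

Lemma conjM_in x y : c x -> c y ->
  exists2 z, O z & kmul d (kconj x) y = kmul d (D, 0) z.
Proof.
move=> hx hy.
have hwy : c (kmul d (kscale K%:Z (omega d)) y).
  exact: (iideal_stable hc (order_of_gen d K) hy).
have [k1 hk1] := kdet_in hx hy; have [k2 hk2] := kdet_in hx hwy.
have hD := D_neq0.
exists (kmul d (D^-1, 0) (kmul d (kconj x) y)); last first.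
  by rewrite /kmul /=; apply: injective_projections => /=; field.
apply/order_ofP; exists (k2 - omega_trace d * K%:Z * k1), k1.
rewrite kcoord1_ratM kcoordw_ratM (kcoord1_conjM d K_gt0) (kcoordw_conjM d K_gt0) hk1 hk2.
by rewrite !intrB !intrM pmulrn; split; field.
Qed.

Lemma conjM_self x : kmul d (kconj x) x = (D * nnorm x, 0).
Proof. rewrite /nnorm mulrC divfK ?D_neq0 //; apply: (@kcoord_inj d); kcoords; ring. Qed.

Lemma nnorm_int x : c x -> exists k : int, nnorm x = k%:~R.
Proof.
move=> hx; have [z hz e] := conjM_in hx hx.
have /order_ofP [i [j [hi hj]]] := hz; exists i.
rewrite /nnorm e kcoord1_ratM hi; field; exact: D_neq0.
Qed.

Lemma ktrace_int x : O x -> exists k : int, ktrace d x = k%:~R.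
Proof.
move=> /order_ofP [i [j [hi hj]]]; exists (2 * i + omega_trace d * K%:Z * j).
rewrite /ktrace; kcoords; rewrite hi hj ?(intrD, intrM, pmulrn); ring.
Qed.

Lemma norm_int x : O x -> exists k : int, c1 (kmul d (kconj x) x) = k%:~R.
Proof.
move=> /order_ofP [i [j [hi hj]]].
exists ((i + omega_trace d * K%:Z * j) * i - omega_cst d * (K%:Z * j) * (K%:Z * j)).
kcoords; rewrite hi hj ?(intrB, intrD, intrM, intrN, pmulrn); ring.
Qed.

Definition beta (g : nat) x := kadd (D, 0) (kscale (- g%:Z) x).

Lemma beta_in g x : c x -> c (beta g x).
Proof.
have [_ cD cZ] := iideal_add_subgroup hc; have [_ [_ hD]] := D_int.
by move=> hx; apply: cD => //; apply: cZ.
Qed.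

Lemma nnorm_beta g x : nnorm (beta g x) = D - g%:R * ktrace d x + g%:R ^+ 2 * nnorm x.
Proof. have hD := D_neq0; rewrite /nnorm /ktrace /beta; kcoords; rewrite intrN; by field. Qed.

Lemma nnorm_shift x : nnorm (kadd x (D, 0)) = nnorm x + ktrace d x + D.
Proof. have hD := D_neq0; rewrite /nnorm /ktrace; kcoords; by field. Qed.

Lemma ktrace_shift x : ktrace d (kadd x (D, 0)) = ktrace d x + 2 * D.
Proof. rewrite /ktrace; kcoords; ring. Qed.

Lemma nnorm_D : nnorm (D, 0) = D.
Proof. have hD := D_neq0; rewrite /nnorm; kcoords; by field. Qed.

Lemma ktrace_D : ktrace d (D, 0) = 2 * D.
Proof. rewrite /ktrace; kcoords; ring. Qed.

Lemma nnorm0 : nnorm kzero = 0.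
Proof. by rewrite /nnorm kmul0r kcoord10 mul0r. Qed.

Lemma ktrace0 : ktrace d kzero = 0.
Proof. by rewrite /ktrace /kconj /kadd /= oppr0 addr0 kcoord10. Qed.

Lemma norm_one_sub (g : nat) y :
  c1 (kmul d (kconj (kadd kone (kscale (- g%:Z) y))) (kadd kone (kscale (- g%:Z) y))) =
  1 - g%:R * ktrace d y + g%:R ^+ 2 * c1 (kmul d (kconj y) y).
Proof. rewrite /ktrace; kcoords; rewrite intrN; ring. Qed.

(* Since 1 = al + g ga with al in c, D * nnorm al = N(1 - g ga) = 1 mod g. *)
Lemma D_coprime (g p : nat) (Dz : int) : prime p -> int_coprime d K c g ->
  D = Dz%:~R -> (p%:Z %| Dz)%Z -> ~~ (p %| g)%N.
Proof.
move=> pp [al [ga [hal [hga e]]]] eDz pD; apply/negP => pg.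
have eal : al = kadd kone (kscale (- g%:Z) ga) by rewrite e; kring.
have [Qa hQa] := nnorm_int hal; have [Tg hTg] := ktrace_int hga.
have [Ng hNg] := norm_int hga.
have eone : Dz * Qa + g%:Z * (Tg - g%:Z * Ng) = 1.
  apply: (@intr_inj rat); rewrite intrD !intrM intrB intrM -eDz -hQa.
  have := norm_one_sub g ga; rewrite -eal [kmul d _ al]conjM_self kcoord1_rat hTg hNg => ->.
  by rewrite pmulrn; ring.
have : (p%:Z %| Dz * Qa + g%:Z * (Tg - g%:Z * Ng))%Z.
  by apply: rpredD; apply: dvdz_mulr => //; rewrite dvdzE.
by rewrite eone dvdz1 => /eqP p1; have := prime_gt1 pp; lia.
Qed.

(* Apply the hypothesis at 0 (so p | D, and p does not divide g), x, x + D and D. *)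
Lemma nnorm_trace_dvd (g p : nat) : prime p -> int_coprime d K c g ->
  (forall x, c x -> forall k : int, nnorm (beta g x) = k%:~R -> (p%:Z %| k)%Z) ->
  forall x, c x -> forall Q T : int, nnorm x = Q%:~R -> ktrace d x = T%:~R ->
    (p%:Z %| T)%Z /\ (p%:Z %| Q)%Z.
Proof.
move=> pp hu H.
have [c0 cD _] := iideal_add_subgroup hc.
have [Dz [eDz hDc]] := D_int.
have pD : (p%:Z %| Dz)%Z.
  by apply: (H kzero c0); rewrite nnorm_beta ktrace0 nnorm0 eDz; ring.
have cop : coprimez p%:Z g%:Z by rewrite coprimezE /= prime_coprime // (D_coprime pp hu eDz).
have hH x : c x -> forall Q T : int, nnorm x = Q%:~R -> ktrace d x = T%:~R ->
    (p%:Z %| - T + g%:Z * Q)%Z.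
  move=> hx Q T hQ hT; rewrite -(Gauss_dvdzr _ cop).
  have := H x hx (Dz + g%:Z * (- T + g%:Z * Q)).
  rewrite nnorm_beta hQ hT eDz ?(intrD, intrM, intrN, pmulrn) => /(_ ltac:(ring)) h.
  have -> : g%:Z * (- T + g%:Z * Q) = (Dz + g%:Z * (- T + g%:Z * Q)) - Dz by ring.
  exact: rpredB.
move=> x hx Q T hQ hT.
have h1 := hH _ hx _ _ hQ hT.
have h2 := hH _ (cD _ _ hx hDc) (Q + T + Dz) (T + 2 * Dz).
rewrite nnorm_shift ktrace_shift hQ hT eDz ?(intrD, intrM) in h2.
have {}h2 := h2 erefl erefl.
have h3 := hH _ hDc Dz (2 * Dz).
rewrite nnorm_D ktrace_D eDz intrM in h3; have {}h3 := h3 erefl erefl.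
have pT : (p%:Z %| T)%Z.
  rewrite -(Gauss_dvdzr _ cop).
  have -> : g%:Z * T = (- (T + 2 * Dz) + g%:Z * (Q + T + Dz)) - (- T + g%:Z * Q)
    - (- (2 * Dz) + g%:Z * Dz) by ring.
  by apply: rpredB; [apply: rpredB|].
split=> //; rewrite -(Gauss_dvdzr _ cop).
have -> : g%:Z * Q = (- T + g%:Z * Q) + T by ring.
exact: rpredD.
Qed.

Lemma conjM_lincomb i j : kmul d (kmul d (kconj e1) e2) (lc i j) =
  kadd (kscale i (kmul d (kmul d (kconj e1) e1) e2))
   (kscale j (kadd (kmul d (kadd (kmul d (kconj (kadd e1 e2)) (kadd e1 e2))
     (kscale (-1) (kadd (kmul d (kconj e1) e1) (kmul d (kconj e2) e2)))) e2)
     (kscale (-1) (kmul d e1 (kmul d (kconj e2) e2))))).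
Proof. rewrite /lincomb; kring. Qed.

(* If p divided the norm form on c, then conj(e1) e2 / (p D) would stabilise c,
   hence lie in O; but its w-coordinate is K / p. *)
Lemma nnorm_not_all_dvd p : prime p ->
  ~ (forall x, c x -> exists q : int, nnorm x = (q * p%:Z)%:~R).
Proof.
move=> pp gQ.
have [_ cD _] := iideal_add_subgroup hc.
have [he1 he2] := basis_in.
have [q1 hq1] := gQ _ he1; have [q2 hq2] := gQ _ he2; have [q3 hq3] := gQ _ (cD _ _ he1 he2).
have hD := D_neq0.
have hp : (p%:R : rat) != 0 by rewrite pnatr_eq0 -lt0n prime_gt0.
pose lam := kmul d ((p%:R * D)^-1, 0) (kmul d (kconj e1) e2).
have : O lam.
  apply/(iideal_End hc) => x /hL [i [j ->]].
  have -> : kmul d lam (lc i j) = lc (- (j * q2)) (i * q1 + j * (q3 - q1 - q2)).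
    rewrite /lam -kmulA conjM_lincomb !conjM_self hq1 hq2 hq3 /lincomb.
    rewrite /kmul /kadd /kscale /=; apply: injective_projections => /=;
      rewrite ?(intrB, intrD, intrM, intrN, pmulrn); field; rewrite ?hp ?hD // pmulrn.
  exact: lincomb_in.
move=> /order_ofP [_ [j0 [_]]]; rewrite /lam kcoordw_ratM (kcoordw_conjM d K_gt0) -/D => e.
have : p%:Z * j0 = 1.
  apply: (@intr_inj rat); rewrite intrM; apply: (mulfI (K_neq0 K_gt0)).
  by rewrite mulrCA -e mulr1 pmulrn; field; rewrite hp hD.
move=> e'; have := dvdz_mulr j0 (dvdzz p%:Z).
by rewrite e' dvdz1 => /eqP p1; have := prime_gt1 pp; lia.
Qed.

Lemma exists_nnorm_ndvd (g p : nat) : prime p -> int_coprime d K c g ->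
  exists2 x, c x & exists2 k : int, nnorm (beta g x) = k%:~R & ~~ (p%:Z %| k)%Z.
Proof.
move=> pp hu; apply: NNPP => hno; apply: (nnorm_not_all_dvd pp) => x hx.
have H y : c y -> forall k : int, nnorm (beta g y) = k%:~R -> (p%:Z %| k)%Z.
  by move=> hy k hk; apply: contraT => hnk; case: hno; exists y => //; exists k.
have [Q hQ] := nnorm_int hx; have [T hT] := ktrace_int (iideal_sub hc hx).
have [_ /dvdzP [q hq]] := nnorm_trace_dvd pp hu H hx hQ hT.
by exists q; rewrite hQ hq.
Qed.

(* The multiplier is nu = conj(beta) / D for a beta = D - g x whose normalised
   norm F is prime to p: then nu = 1 mod g on c, and nu beta = F lies in nu c. *)
Lemma coprime_step (g p : nat) : prime p -> int_coprime d K c g ->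
  exists nu, congr_one d K nu c g /\ int_coprime d K (lscale d nu c) p.
Proof.
move=> pp hu.
have [x hx [F hF hpF]] := exists_nnorm_ndvd pp hu.
have hD := D_neq0.
set be := beta g x in hF; have hbe : c be := beta_in g hx.
exists (kmul d (D^-1, 0) (kconj be)); split.
  move=> y hy; have [z hz ez] := conjM_in hx hy; exists z => //.
  have -> : kmul d (kmul d (D^-1, 0) (kconj be)) y =
      kadd y (kscale (-1) (kmul d (g%:R * D^-1, 0) (kmul d (kconj x) y))).
    rewrite /be /beta /kmul /kadd /kscale /kconj /=.
    by apply: injective_projections => /=; rewrite ?intrN ?mulrz_nat; field.
  rewrite ez /kmul /kadd /kscale /=; apply: injective_projections => /=;
    rewrite ?mulrz_nat; by field.
have cop : coprimez p%:Z F by rewrite coprimezE /= prime_coprime // -dvdzE.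
have [[u v] /= huv] := coprimezP _ _ cop.
exists (kscale v (kmul d (kmul d (D^-1, 0) (kconj be)) be)), (kscale u kone); split.
  exists (kscale v be); split; last by rewrite kmulZr.
  by have [_ _ cZ] := iideal_add_subgroup hc; apply: cZ.
split; first exact/order_ofZ/order_of1.
have -> : kmul d (kmul d (D^-1, 0) (kconj be)) be = (F%:~R, 0).
  by rewrite -kmulA conjM_self -hF /kmul /=; apply: injective_projections => /=; field.
rewrite /kscale /kadd /kone /=; apply: injective_projections => /=; last by ring.
have h : ((u * p%:Z + v * F)%:~R : rat) = 1 by rewrite huv.
by rewrite intrD !intrM in h; apply: esym; apply: etrans h; ring.
Qed.

End NormForm.

Section Multiplier.
Variables (d K : nat).
Hypothesis K_gt0 : (0 < K)%N.
Local Notation O := (order_of d K).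

Lemma iideal_lscale_tpos c nu g : iideal d K c -> totally_positive d nu ->
  congr_one d K nu c g -> iideal d K (lscale d nu c).
Proof. by move=> hc tp cg; apply: iideal_lscale hc (tpos_knorm_neq0 tp) (congr_one_sub hc cg). Qed.

Lemma congr_one_shift c nu (g q : nat) : iideal d K c -> congr_one d K nu c g ->
  congr_one d K (kadd nu (kscale (g * q)%N%:Z kone)) c g.
Proof.
move=> hc hcg x hx; have [z hz ez] := hcg x hx.
exists (kadd z (kscale (- q%:Z) x)); first exact/order_ofD/order_ofZ/(iideal_sub hc).
have -> : kadd x (kscale (-1) (kmul d (kadd nu (kscale (g * q)%N%:Z kone)) x)) =
  kadd (kadd x (kscale (-1) (kmul d nu x))) (kscale (-1) (kscale (g * q)%N%:Z x)) by kring.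
by rewrite ez; kring.
Qed.

Lemma congr_oneM c nu1 nu2 g p : congr_one d K nu1 c g ->
  congr_one d K nu2 (lscale d nu1 c) (g * p) -> congr_one d K (kmul d nu2 nu1) c g.
Proof.
move=> cg1 cg2 x hx; have [z1 hz1 ez1] := cg1 x hx.
have [z2 hz2 ez2] := cg2 (kmul d nu1 x) (ex_intro _ x (conj hx erefl)).
exists (kadd z1 (kscale p%:Z z2)); first exact/order_ofD/order_ofZ.
have -> : kadd x (kscale (-1) (kmul d (kmul d nu2 nu1) x)) =
  kadd (kadd x (kscale (-1) (kmul d nu1 x)))
    (kadd (kmul d nu1 x) (kscale (-1) (kmul d nu2 (kmul d nu1 x)))) by kring.
by rewrite ez1 ez2; kring.
Qed.

Lemma tpos_coprime_step c (g p : nat) : prime p -> (0 < g)%N ->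
  iideal d K c -> int_coprime d K c g ->
  exists nu, [/\ totally_positive d nu, congr_one d K nu c g & int_coprime d K (lscale d nu c) p].
Proof.
move=> pp g0 hc hu; have [e1 [e2 [he hL]]] := iideal_lattice hc.
have [nu [cg uc]] := coprime_step K_gt0 hc he hL pp hu.
have gp0 : (0 < g * p)%N by rewrite muln_gt0 g0 prime_gt0.
have [k tpk] := tpos_shift d nu gp0.
exists (kadd nu (kscale (g * p * k)%N%:Z kone)); split=> //.
  by rewrite -mulnA; exact: congr_one_shift.
case: uc => al [ga [[y [hy ->]] [hga e]]].
exists (kmul d (kadd nu (kscale (g * p * k)%N%:Z kone)) y).
exists (kadd ga (kscale (-1) (kscale (g * k)%N%:Z y))); split; first by exists y.
split; first exact/order_ofD/order_ofZ/order_ofZ/(iideal_sub hc).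
rewrite {1}e; kring.
Qed.

(* One prime factor p of N at a time; the later multipliers are = 1 mod g p,
   so they keep the coprimality to p already achieved. *)
Lemma tpos_coprime_multiplier (N : nat) : (0 < N)%N -> forall g c, (0 < g)%N ->
  iideal d K c -> int_coprime d K c g ->
  exists nu, [/\ totally_positive d nu, congr_one d K nu c g & int_coprime d K (lscale d nu c) N].
Proof.
elim/ltn_ind: N => N IH N0 g c g0 hc hu.
case: (ltnP 1 N) => N1; last first.
  have -> : N = 1%N by lia.
  exists kone; split; first exact: tpos1.
    move=> x hx; exists kzero; first exact: order_of0.
    by rewrite kmul1 kaddN kscalek0.
  exists kzero, kone; split.
    by exists kzero; split; [case: (iideal_add_subgroup hc) | rewrite kmul0r].
  by split; [exact: order_of1 | rewrite kscale1 kadd0].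
set p := pdiv N; have pp : prime p by exact: pdiv_prime.
have pN : (p %| N)%N := pdiv_dvd N.
have eN : N = (p * (N %/ p))%N by rewrite mulnC divnK.
have N'lt : (N %/ p < N)%N by apply: ltn_Pdiv; [exact: prime_gt1 | lia].
have N'0 : (0 < N %/ p)%N by rewrite divn_gt0 ?prime_gt0 // dvdn_leq.
have [nu1 [tp1 cg1 uc1]] := tpos_coprime_step pp g0 hc hu.
have hc1 := iideal_lscale_tpos hc tp1 cg1.
have ugp : int_coprime d K (lscale d nu1 c) (g * p).
  by rewrite mulnC; apply: int_coprimeM uc1 (int_coprime_lscale hu cg1 (dvdnn g)).
have gp0 : (0 < g * p)%N by rewrite muln_gt0 g0 prime_gt0.
have [nu2 [tp2 cg2 uc2]] := IH _ N'lt N'0 (g * p)%N _ gp0 hc1 ugp.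
exists (kmul d nu2 nu1); split; [exact: tposM | exact: congr_oneM cg2 |].
apply: (int_coprime_eq (fun x => iff_sym (lscaleM d _ _ _ x))).
rewrite eN; apply: int_coprimeM (iideal_lscale_tpos hc1 tp2 cg2) _ uc2.
exact: int_coprime_lscale uc1 cg2 (dvdn_mull g (dvdnn p)).
Qed.

End Multiplier.

(* the O-ideal c O = c + m omega c generated by an O'-ideal c *)
Definition ext_ideal (d m : nat) (c : lat) : lat :=
  fun x => exists y z, c y /\ c z /\ x = kadd y (kmul d (kscale m%:Z (omega d)) z).

Section Extension.
Variables (d n f m : nat).
Hypothesis n_gt0 : (0 < n)%N.
Local Notation O := (order_of d m).
Local Notation O' := (order_of d (n * m)).
Local Notation W := (kscale m%:Z (omega d)).
Local Notation E := (ext_ideal d m).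

Variable c : lat.
Hypotheses (hc : iideal d (n * m) c) (hu : int_coprime d (n * m) c (n * f)).

Let c_sub := iideal_sub hc.
Let c_stable := iideal_stable hc.

Lemma nW_in : O' (kscale n%:Z W).
Proof. by rewrite kscaleA -PoszM; exact: order_of_gen. Qed.

Lemma ext_add_subgroup : add_subgroup (E c).
Proof.
have [c0 cD cZ] := iideal_add_subgroup hc; split.
- by exists kzero, kzero; do !split=> //; rewrite kmul0r kadd0.
- move=> x y [y1 [z1 [h1 [h2 ->]]]] [y2 [z2 [h3 [h4 ->]]]].
  by exists (kadd y1 y2), (kadd z1 z2); do !split; auto; kring.
- move=> k x [y [z [h1 [h2 ->]]]].
  by exists (kscale k y), (kscale k z); do !split; auto; kring.
Qed.

Lemma ext_sup x : c x -> E c x.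
Proof.
have [c0 _ _] := iideal_add_subgroup hc.
by move=> hx; exists x, kzero; do !split=> //; rewrite kmul0r kadd0r.
Qed.

Lemma ext_W x : c x -> E c (kmul d W x).
Proof.
have [c0 _ _] := iideal_add_subgroup hc.
by move=> hx; exists kzero, x; do !split=> //; rewrite kadd0.
Qed.

Lemma ext_sub_order x : E c x -> O x.
Proof.
case=> y [z [h1 [h2 ->]]]; apply: order_ofD; first exact/order_of_sub/c_sub.
by apply: order_ofM; [exact: order_of_gen | exact/order_of_sub/c_sub].
Qed.

(* Split al in O as al' + j W with al' in O', and W^2 as w' + j' W. *)
Lemma ext_stable al x : O al -> E c x -> E c (kmul d al x).
Proof.
move=> hal hx; have [_ eD eZ] := ext_add_subgroup.
have [al' [j [hal' eal]]] := order_of_split n hal.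
have [w' [j' [hw' eW]]] := order_of_split n (order_ofM (order_of_gen d m) (order_of_gen d m)).
case: hx => y [z [hy [hz ->]]]; rewrite kmulDr eal !kmulDl; apply: (eD _ _); apply: (eD _ _).
- exact/ext_sup/c_stable.
- by rewrite kmulZl; apply/eZ/ext_W.
- by rewrite kmulA [kmul d al' W]kmulC -kmulA; apply/ext_W/c_stable.
rewrite kmulZl kmulA eW kmulDl; apply: (eZ _ _); apply: (eD _ _); first exact/ext_sup/c_stable.
by rewrite kmulZl; apply/eZ/ext_W.
Qed.

Lemma ext_scale x : E c x -> c (kscale n%:Z x).
Proof.
have [_ cD cZ] := iideal_add_subgroup hc.
case=> y [z [hy [hz ->]]]; rewrite kscaleDr; apply: cD; first exact: cZ.
by rewrite -kmulZl; apply/c_stable/hz/nW_in.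
Qed.

Lemma ext_lattice : is_lattice (E c).
Proof.
have hn : (n%:R : rat) != 0 by rewrite pnatr_eq0 -lt0n.
have hk : knorm d ((n%:R)^-1, 0) != 0.
  by rewrite /knorm /= expr0n /= mulr0 subr0 expf_neq0 // invr_eq0.
have nK y : kscale n%:Z (kmul d ((n%:R)^-1, 0) y) = y.
  rewrite /kmul /kscale; have -> : ((n%:Z)%:~R : rat) = n%:R by [].
  by apply: injective_projections => /=; field.
apply: (sublattice n_gt0 (lscale_lattice (iideal_lattice hc) hk) ext_add_subgroup).
  move=> x hx; exists (kscale n%:Z x); split; first exact: ext_scale.
  by rewrite -[x in LHS]nK kmulZr.
by move=> x [y [hy ->]]; rewrite nK; exact: ext_sup.
Qed.

Lemma ext_End : lat_eq (End_lat d (E c)) O.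
Proof.
have [al [ga [hal [hga e]]]] := hu.
move=> l; split=> [hl|hl x hx]; last exact: ext_stable.
have nl : O' (kscale n%:Z l).
  by apply/(iideal_End hc) => y hy; rewrite kmulZl; apply/ext_scale/hl/ext_sup.
have -> : l = kadd (kmul d l al) (kscale f%:Z (kmul d (kscale n%:Z l) ga)).
  by rewrite -[l in LHS](kmul1r d) e; kring.
apply: order_ofD; first exact/ext_sub_order/hl/ext_sup.
exact/order_ofZ/(order_of_sub (n := n))/order_ofM.
Qed.

Lemma ext_IO : IO d O (int_ideal d (n * f) O) (E c).
Proof.
apply/IO_iidealP; split.
  split; last by move=> x; exact: ext_sub_order.
  by split; [split; [exact: ext_lattice | exact: ext_stable] | exact: ext_End].
have [al [ga [hal [hga e]]]] := hu.
by exists al, ga; do !split=> //; [exact: ext_sup | exact: order_of_sub hga].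
Qed.

(* x = y + W z in O' forces W z in O', and then W z = (W z) al + f (n W) (z ga) in c. *)
Lemma ext_cap : lat_eq (lcap (E c) O') c.
Proof.
have [al [ga [hal [hga e]]]] := hu.
have [_ cD cZ] := iideal_add_subgroup hc.
move=> x; split=> [|hx]; last by split; [exact: ext_sup | exact: c_sub].
case=> [[y [z [hy [hz ->]]]] hxO]; apply: (cD _ _ hy).
have hWz : O' (kmul d W z).
  have -> : kmul d W z = kadd (kadd y (kmul d W z)) (kscale (-1) y) by kring.
  exact/order_ofD/order_ofZ/c_sub.
have -> : kmul d W z = kadd (kmul d (kmul d W z) al)
    (kscale f%:Z (kmul d (kscale n%:Z W) (kmul d z ga))).
  by rewrite -[kmul d W z in LHS](kmul1r d) e; kring.
apply: cD; first exact: c_stable.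
by apply/cZ/c_stable; [exact: nW_in | rewrite kmulC; exact: c_stable].
Qed.

End Extension.

Lemma equiv_mod_eql d g (L1 L1' L2 : lat) : lat_eq L1 L1' ->
  equiv_mod d g L1 L2 -> equiv_mod d g L1' L2.
Proof.
move=> e [l [tp [[mu [hmu hl]] hsc]]]; exists l; split=> //; split.
  exists mu; split=> // x /e hx y /e hy; apply/e; exact: hmu.
by move=> x; rewrite -hsc; split; case=> y [/e hy ->]; exists y.
Qed.

(* With lambda = nu^-1 and mu = (lambda - 1) / f: mu (nu y) = (y - nu y) / f lies in O. *)
Lemma equiv_mod_lscale d K (b : lat) nu (f : nat) : (0 < f)%N -> iideal d K b ->
  totally_positive d nu -> congr_one d K nu b f -> equiv_mod d f (lscale d nu b) b.
Proof.
move=> f0 hb tp cg; have hnu := tpos_knorm_neq0 tp.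
have hc := iideal_lscale_tpos hb tp cg.
have hf : (f%:R : rat) != 0 by rewrite pnatr_eq0 -lt0n.
have fK z : kmul d ((f%:R)^-1, 0) (kscale f%:Z z) = z.
  rewrite /kmul /kscale; have -> : ((f%:Z)%:~R : rat) = f%:R by [].
  by case: z => z1 z2; apply: injective_projections => /=; field.
set l := kinv d nu.
have lnu y : kmul d l (kmul d nu y) = y.
  by rewrite kmulA [kmul d l nu]kmulC kmulV // kmul1.
exists l; split; first exact: tpos_inv.
split; last first.
  move=> x; split; first by case=> w [[y [hy ->]] ->]; rewrite lnu.
  by move=> hx; exists (kmul d nu x); split; [exists x | rewrite lnu].
exists (kmul d ((f%:R)^-1, 0) (kadd l (kscale (-1) kone))); split; last first.
  rewrite /kmul /kadd /kscale /kone /=; have -> : ((f%:Z)%:~R : rat) = f%:R by [].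
  by apply: injective_projections => /=; field; rewrite hf hnu.
move=> x [y [hy ->]] w hw; apply: (iideal_stable hc _ hw).
have [z hz ez] := cg y hy.
suff -> : kmul d (kmul d ((f%:R)^-1, 0) (kadd l (kscale (-1) kone))) (kmul d nu y) = z by [].
have -> : kmul d (kmul d ((f%:R)^-1, 0) (kadd l (kscale (-1) kone))) (kmul d nu y) =
  kmul d ((f%:R)^-1, 0) (kadd (kmul d l (kmul d nu y)) (kscale (-1) (kmul d nu y))) by kring.
by rewrite lnu ez fK.
Qed.

Lemma theta_surjective d n f m : (0 < n)%N -> (0 < f)%N -> (0 < m)%N ->
  forall b, IO d (order_of d (n * m)) (int_ideal d f (order_of d (n * m))) b ->
  exists a, IO d (order_of d m) (int_ideal d (n * f) (order_of d m)) a /\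
    equiv_mod d f (lcap a (order_of d (n * m))) b.
Proof.
move=> n0 f0 m0 b /IO_iidealP [hb hbf].
have nm0 : (0 < n * m)%N by rewrite muln_gt0 n0 m0.
have [nu [tp cg hcn]] := tpos_coprime_multiplier nm0 n0 f0 hb hbf.
have hc := iideal_lscale_tpos hb tp cg.
have hcnf := int_coprimeM hc hcn (int_coprime_lscale hbf cg (dvdnn f)).
exists (ext_ideal d m (lscale d nu b)); split; first exact: ext_IO.
have e : lat_eq (lscale d nu b) (lcap (ext_ideal d m (lscale d nu b)) (order_of d (n * m))).
  by move=> x; apply: iff_sym; exact: (ext_cap hc hcnf x).
exact: equiv_mod_eql e (equiv_mod_lscale f0 hb tp cg).
Qed.

Theorem proposition2p1 (d n f m : nat) :
  real_quadratic d -> (0 < n)%N -> (0 < f)%N -> (0 < m)%N ->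
  let O := order_of d m in
  let O' := order_of d (n * m) in
  let nfr := int_ideal d (n * f) O in
  let fr' := int_ideal d f O' in
  (forall a, IO d O nfr a ->
     invertible d O' (lcap a O') /\ IO d O' fr' (lcap a O')) /\
  (forall a a', IO d O nfr a -> IO d O nfr a' ->
     lat_eq (lcap (lmul d a a') O') (lmul d (lcap a O') (lcap a' O'))) /\
  (forall a a', IO d O nfr a -> IO d O nfr a' ->
     equiv_mod d (n * f) a a' -> equiv_mod d f (lcap a O') (lcap a' O')) /\
  (forall b, IO d O' fr' b ->
     exists a, IO d O nfr a /\ equiv_mod d f (lcap a O') b).
Proof.
(* The argument does not use that d is squarefree or > 1. *)
move=> _ n0 f0 m0 /=; split; [|split; [|split]].
- by move=> a Ha; have h := theta_IO n0 Ha; split=> //; case: h.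
- exact: theta_mul.
- exact: theta_equiv.
- exact: theta_surjective.
Qed.
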